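(* Let $G$ be a connected block graph on $n$ vertices with set of cut vertices $V_c(G)$, and let $k$ be an integer with $2\le k\le n$. Then $$SW_k(G)=\sum_{v\in V_c(G)} N_k(G\setminus v) + (k-1)\binom{n}{k}.$$
   Context: A block graph is a graph in which every block (maximal connected induced subgraph without cut vertices) is a clique. For connected $G$ and $S\subseteq V(G)$, the Steiner distance $d(S)$ is the minimum number of edges of a connected subgraph of $G$ whose vertex set contains $S$, and $SW_k(G)=\sum_{S\subseteq V(G),|S|=k} d(S)$. $G\setminus v$ is the graph obtained by deleting vertex $v$. For a graph $H$ with $p>1$ connected components $H_1,\dots,H_p$, $$N_k(H)=\sum_{\substack{l_1+\cdots+l_p=k\\0\le l_1,\dots,l_p<k}}\binom{|V(H_1)|}{l_1}\cdots\binom{|V(H_p)|}{l_p},$$ i.e. the number of $k$-subsets of $V(H)$ not contained in a single component; conventions $\binom{m}{0}=1$, $\binom{m}{l}=0$ for $m<l$. *)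

(* A simple graph is a symmetric irreflexive relation e on a finType T. *)
From mathcomp Require Import all_boot.
Set Implicit Arguments. Unset Strict Implicit. Unset Printing Implicit Defensive.

Section Graphs.
Variables (T : finType) (e : rel T).

Definition induced (W : {set T}) : rel T :=
  fun x y => [&& x \in W, y \in W & e x y].

Definition connectedb (W : {set T}) : bool :=
  [forall x in W, forall y in W, connect (induced W) x y].

Definition nonseparable (W : {set T}) : bool :=
  connectedb W && [forall v in W, connectedb (W :\ v)].

Definition is_block (B : {set T}) : bool :=
  nonseparable B && [forall B' : {set T}, (B \proper B') ==> ~~ nonseparable B'].

Definition clique (B : {set T}) : bool :=
  [forall x in B, forall y in B, (x != y) ==> e x y].

Definition block_graph : Prop := forall B : {set T}, is_block B -> clique B.

Definition cut_vertices : {set T} := [set v | ~~ connectedb [set~ v]].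

(* A subgraph (W, F) of G: F is a set of edges {x,y} of G with x, y in W. *)
Definition subgraph_edge (W : {set T}) (f : {set T}) : bool :=
  [exists x, exists y, [&& e x y, x \in W, y \in W & f == [set x; y]]].

Definition subgraph_connected (W : {set T}) (F : {set {set T}}) : bool :=
  [forall x in W, forall y in W,
     connect (fun a b => [set a; b] \in F) x y].

Definition steiner_candidate (S : {set T}) (p : {set T} * {set {set T}}) : bool :=
  [&& S \subset p.1, [forall f in p.2, subgraph_edge p.1 f]
    & subgraph_connected p.1 p.2].

(* The default value #|{set T}| bounds every edge count, so it
   never affects the minimum when a candidate exists (e.g. G connected). *)
Definition steiner_dist (S : {set T}) : nat :=
  \big[minn/#|{: {set T}}|]_(p : {set T} * {set {set T}} | steiner_candidate S p)
     #|p.2|.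

Definition steiner_wiener (k : nat) : nat :=
  \sum_(S : {set T} | #|S| == k) steiner_dist S.

Definition component (W : {set T}) (u : T) : {set T} :=
  [set w in W | connect (induced W) u w].

Definition Nk (W : {set T}) (k : nat) : nat :=
  #|[set S : {set T} | [&& S \subset W, #|S| == k &
        ~~ [exists u in W, S \subset component W u]]]|.

End Graphs.

(* For nonempty S, d(S) = |S| + |sep S| - 1, where sep S is the set of vertices
   v outside S such that S meets several components of G - v.  Any connected
   subgraph containing S contains sep S, whence the lower bound.  In a block
   graph, two neighbours of v joined by a path avoiding v lie on a cycle, hence
   in one block, hence are adjacent; so cutting a connected W down to one
   component of G - v keeps it connected, and a smallest connected superset of
   S is exactly S :|: sep S, whose spanning trees give the upper bound.
   Summing over k-sets, v separates S exactly when S is counted in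
   N_k(G - v), and only cut vertices separate anything. *)

From mathcomp Require Import all_boot.
Set Implicit Arguments. Unset Strict Implicit. Unset Printing Implicit Defensive.

Lemma geq_bigmin_cond (I : finType) (P : pred I) (F : I -> nat) m i0 :
  P i0 -> \big[minn/m]_(i | P i) F i <= F i0.
Proof.
move=> Pi0; have : i0 \in index_enum I := mem_index_enum i0.
elim: (index_enum I) => [//|j s IHs]; rewrite inE big_cons.
case/orP=> [/eqP<-|/IHs le_s]; first by rewrite Pi0 geq_minl.
by case: (P j) => //; apply: leq_trans (geq_minr _ _) le_s.
Qed.

Section BreadthFirstParent.
Variables (T : finType) (R : rel T) (r : T).

Definition reach_in n x := [exists p : n.-tuple T, path R x p && (last x p == r)].

Lemma reach_inP n x :
  reflect (exists p, [/\ size p = n, path R x p & last x p = r]) (reach_in n x).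
Proof.
apply: (iffP existsP) => [[p /andP[Rp /eqP lastp]]|[p [sz_p Rp lastp]]].
  by exists (val p); rewrite size_tuple.
have sz_p' : size p == n by apply/eqP.
by exists (Tuple sz_p'); rewrite /= Rp lastp eqxx.
Qed.

Definition dist x := find (reach_in ^~ x) (iota 0 #|T|).

Lemma dist_reach x : connect R x r -> dist x < #|T| /\ reach_in (dist x) x.
Proof.
case/connectP=> p0 /shortenP[p Rp uniq_p _ last_p].
have lt_p : size p < #|T| by move/card_uniqP: uniq_p => /= <-; apply: max_card.
have has_reach : has (reach_in ^~ x) (iota 0 #|T|).
  by apply/hasP; exists (size p); rewrite ?mem_iota //; apply/reach_inP; exists p.
have lt_dist : dist x < #|T| by move: has_reach; rewrite has_find size_iota.
by split=> //; have := nth_find 0 has_reach; rewrite nth_iota.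
Qed.

Lemma dist_min x m : reach_in m x -> m < #|T| -> dist x <= m.
Proof.
move=> reach_m lt_m; rewrite leqNgt; apply/negP => lt_m_dist.
by have := before_find 0 lt_m_dist; rewrite nth_iota // reach_m.
Qed.

Definition parent x := odflt x [pick y | R x y && (dist y < dist x)].

Lemma parentP x : connect R x r -> x != r -> R x (parent x) && (dist (parent x) < dist x).
Proof.
move=> conn_x neq_xr; rewrite /parent; case: pickP => [y -> //|no_closer].
case: (dist_reach conn_x) => lt_dist /reach_inP[[|y p] [sz_p /= Rp lastp]].
  by rewrite lastp eqxx in neq_xr.
case/andP: Rp => Rxy Rp; have reach_y : reach_in (size p) y by apply/reach_inP; exists p.
have lt_y : dist y < dist x.
  by rewrite -sz_p ltnS dist_min // (ltn_trans _ lt_dist) // -sz_p.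
by have := no_closer y; rewrite Rxy lt_y.
Qed.

End BreadthFirstParent.

Section InducedSubgraphs.
Variables (T : finType) (e : rel T).

Lemma connectedbP (W : {set T}) :
  reflect {in W &, forall x y, connect (induced e W) x y} (connectedb e W).
Proof.
apply: (iffP forallP) => [connW x y xW yW | connW x].
  by move: (connW x); rewrite xW => /forallP/(_ y); rewrite yW.
by apply/implyP => xW; apply/forallP => y; apply/implyP; apply: connW.
Qed.

Lemma path_induced_sub (A : {set T}) x s :
  path (induced e A) x s -> x \in A -> {subset x :: s <= A}.
Proof.
elim: s x => [|y s IHs] x /=; first by move=> _ xA z; rewrite inE => /eqP->.
case/andP=> /and3P[_ yA _] As xA z; rewrite inE => /orP[/eqP->//|]; exact: IHs.
Qed.

Lemma induced_path (A : {set T}) x s : path (induced e A) x s -> path e x s.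
Proof. by apply: sub_path => a b /and3P[]. Qed.

Lemma path_induced (A : {set T}) x s :
  path e x s -> {subset x :: s <= A} -> path (induced e A) x s.
Proof.
move=> es sA; apply: (@sub_in_path _ (mem A) e) es; last exact/allP.
by move=> a b aA bA eab; rewrite /induced aA bA eab.
Qed.

Lemma connect_induced_sub (A B : {set T}) x y :
  A \subset B -> connect (induced e A) x y -> connect (induced e B) x y.
Proof.
move=> /subsetP AB; apply: connect_sub => a b /and3P[aA bA eab].
by apply: connect1; rewrite /induced (AB _ aA) (AB _ bA) eab.
Qed.

Lemma nonseparable_sub_block (C : {set T}) :
  nonseparable e C -> exists2 B, is_block e B & C \subset B.
Proof.
move=> nsC; pose P B := nonseparable e B && (C \subset B).
have PC : P C by rewrite /P nsC subxx.
case: (@arg_maxnP _ C P (fun B => #|B|) PC) => B /andP[nsB CB] maxB.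
exists B => //; rewrite /is_block nsB; apply/forallP => B'; apply/implyP => ltBB'.
apply/negP => nsB'; have := maxB B'.
rewrite /P nsB' (subset_trans CB (proper_sub ltBB')) => /(_ isT).
by rewrite /geq /= leqNgt proper_card.
Qed.

Lemma path_connect_sym x s : connect_sym e -> path e x s ->
  {in x :: s &, forall y z, connect e y z}.
Proof.
move=> syme xs y z ys zs; apply: connect_trans (path_connect xs zs).
by rewrite syme; apply: (path_connect xs ys).
Qed.

Hypothesis esym : symmetric e.

Lemma induced_connect_sym (W : {set T}) : connect_sym (induced e W).
Proof. by apply: sym_connect_sym => x y; rewrite /induced esym andbCA. Qed.

Lemma connectedb_hub (W : {set T}) h :
  {in W, forall y, connect (induced e W) h y} -> connectedb e W.
Proof.
move=> hubW; apply/connectedbP => x y xW yW.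
by apply: connect_trans (hubW y yW); rewrite induced_connect_sym; apply: hubW.
Qed.

Lemma path_connectedb x s : path e x s -> connectedb e [set y in x :: s].
Proof.
move=> es; apply: (@connectedb_hub _ x) => y; rewrite inE => ys.
have es' : path (induced e [set y in x :: s]) x s by apply: path_induced es _ => z zs; rewrite inE.
exact: path_connect es' _ ys.
Qed.

(* Deleting a vertex from a cycle leaves a path: rotate it to the front. *)
Lemma cycle_nonseparable c : uniq c -> cycle e c -> nonseparable e [set x in c].
Proof.
have cycle_path x s : cycle e (x :: s) -> path e x s by rewrite /= rcons_path => /andP[].
case: c => [|x0 s] uniq_c cyc_c.
  by apply/andP; split; apply/forallP => x; rewrite inE.
rewrite /nonseparable path_connectedb ?cycle_path //; apply/forallP => x.
apply/implyP; rewrite inE => /rot_to[i s' rot_c].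
have [x_notin cyc_s'] : x \notin s' /\ cycle e (x :: s').
  by move: (rot_uniq i (x0 :: s)) (rot_cycle i e (x0 :: s)); rewrite rot_c uniq_c cyc_c => /andP[].
have -> : [set y in x0 :: s] :\ x = [set y in s'].
  apply/setP => y; rewrite in_setD1 !in_set -(mem_rot i) rot_c in_cons.
  by case: eqP => [->|]; rewrite ?(negbTE x_notin).
case: s' {rot_c x_notin} cyc_s' => [|y s'] /cycle_path.
  by move=> _; apply/forallP => y; rewrite inE.
by case/andP=> _; apply: path_connectedb.
Qed.

End InducedSubgraphs.

Section SpanningEdgeSets.
Variable T : finType.

Definition edge_rel (F : {set {set T}}) : rel T := fun a b => [set a; b] \in F.

(* [x |-> {x, parent x}] injects the non-root vertices into [F], as the parent
   is strictly closer to the root. *)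
Lemma card_le_connected_edges (F : {set {set T}}) (W : {set T}) r :
  r \in W -> {in W, forall x, connect (edge_rel F) x r} -> #|W| <= #|F| + 1.
Proof.
move=> rW connW; rewrite (cardsD1 r W) rW addnC leq_add2r.
set R := edge_rel F; pose up x := [set x; parent R r x].
have upP x : x \in W :\ r -> R x (parent R r x) && (dist R r (parent R r x) < dist R r x).
  by case/setD1P=> neq_xr xW; apply: parentP => //; apply: connW.
rewrite -(card_in_imset (f := up)); last first.
  move=> x1 x2 /upP/andP[_ lt1] /upP/andP[_ lt2] up12; apply/eqP/contraT => neq12.
  have x1_up : x1 \in up x2 by rewrite -up12 !inE eqxx.
  have x2_up : x2 \in up x1 by rewrite up12 !inE eqxx.
  move: x1_up x2_up; rewrite !inE (negbTE neq12) (eq_sym x2) (negbTE neq12) /=.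
  move=> /eqP p2 /eqP p1; move: lt1 lt2; rewrite -p1 -p2 => lt21 /(ltn_trans lt21).
  by rewrite ltnn.
apply: subset_leq_card; apply/subsetP => _ /imsetP[x /upP/andP[Rx _] ->]; exact: Rx.
Qed.

Lemma exists_spanning_edges (e : rel T) (W : {set T}) r :
  r \in W -> connectedb e W -> exists F : {set {set T}},
    [&& [forall f in F, subgraph_edge e W f], subgraph_connected W F & #|F| <= #|W| - 1].
Proof.
move=> rW /connectedbP connW; set R := induced e W.
have connR x : x \in W -> connect R x r by move=> xW; apply: connW.
pose F := [set [set x; parent R r x] | x in W :\ r].
have symF : connect_sym (edge_rel F).
  by apply: sym_connect_sym => a b; rewrite /edge_rel setUC.
have to_root n x : dist R r x < n -> connect R x r -> connect (edge_rel F) x r.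
  elim: n x => [//|n IHn] x lt_x conn_x.
  have [->|neq_xr] := eqVneq x r; first exact: connect0.
  case/andP: (parentP conn_x neq_xr) => /and3P[xW pW _] lt_p.
  apply: connect_trans (connect1 _) (IHn _ (leq_trans lt_p lt_x) (connR _ pW)).
  by apply/imsetP; exists x; rewrite // !inE neq_xr.
exists F; apply/and3P; split.
- apply/forallP => f; apply/implyP => /imsetP[x /setD1P[neq_xr xW] ->].
  case/andP: (parentP (connR x xW) neq_xr) => /and3P[_ pW exp] _.
  by apply/existsP; exists x; apply/existsP; exists (parent R r x); rewrite exp xW pW eqxx.
- apply/forallP => x; apply/implyP => xW; apply/forallP => y; apply/implyP => yW.
  apply: connect_trans (to_root _ _ (ltnSn _) (connR x xW)) _.
  by rewrite symF; apply: to_root (ltnSn _) (connR y yW).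
- by rewrite (leq_trans (leq_imset_card _ _)) // (cardsD1 r W) rW add1n subn1.
Qed.

End SpanningEdgeSets.

Section Separators.
Variables (T : finType) (e : rel T).
Hypothesis esym : symmetric e.

Lemma connect_component (W : {set T}) u x y : x \in W ->
  connect (induced e W) x y -> (x \in component e W u) = (y \in component e W u).
Proof.
move=> xW cxy; have yW : y \in W.
  by case/connectP: cxy => p xp ->; apply: path_induced_sub xp xW _ (mem_last x p).
rewrite !inE xW yW /=; apply/idP/idP => [cux|cuy]; first exact: connect_trans cux cxy.
by apply: connect_trans cuy _; rewrite induced_connect_sym.
Qed.

Lemma component_connect (W : {set T}) u x y :
  x \in component e W u -> y \in component e W u -> connect (induced e W) x y.
Proof.
rewrite !inE => /andP[_ cux] /andP[_ cuy]; apply: connect_trans cuy.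
by rewrite induced_connect_sym.
Qed.

Definition separates (S : {set T}) v :=
  (S \subset [set~ v]) && ~~ [exists u in [set~ v], S \subset component e [set~ v] u].

Definition separators (S : {set T}) := [set v | separates S v].

Lemma card_setU_separators S : #|S :|: separators S| = #|S| + #|separators S|.
Proof.
rewrite cardsU; suff -> : S :&: separators S = set0 by rewrite cards0 subn0.
apply/setP => x; rewrite !inE; apply/negP => /andP[xS /andP[/subsetP/(_ x xS)]].
by rewrite !inE eqxx.
Qed.

Lemma separators_sub (W S : {set T}) : S != set0 -> S \subset W -> connectedb e W ->
  separators S \subset W.
Proof.
case/set0Pn=> s sS SW /connectedbP cW; apply/subsetP => v; rewrite inE => /andP[SV not_split].
apply: contraNT not_split => vW; apply/existsP; exists s; rewrite (subsetP SV) //=.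
have WV : W \subset [set~ v].
  by apply/subsetP => w wW; rewrite !inE; apply: contraNneq vW => <-.
apply/subsetP => t tS; rewrite inE (subsetP SV) //=.
by apply: connect_induced_sub WV (cW _ _ _ _); apply: (subsetP SW).
Qed.

Lemma separators_sub_cut_vertices S : S != set0 -> separators S \subset cut_vertices e.
Proof.
move=> S0; apply/subsetP => v sep_v; rewrite inE; apply/negP => conn_v.
have SV : S \subset [set~ v] by move: sep_v; rewrite inE => /andP[].
by have := subsetP (separators_sub S0 SV conn_v) v sep_v; rewrite !inE eqxx.
Qed.

End Separators.

Section BlockGraphs.
Variables (T : finType) (e : rel T).
Hypotheses (esym : symmetric e) (eirr : irreflexive e) (bg : block_graph e).

Lemma nonseparable_adjacent (C : {set T}) x y :
  nonseparable e C -> x \in C -> y \in C -> x != y -> e x y.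
Proof.
case/nonseparable_sub_block=> B /bg/forallP clB /subsetP CB xC yC.
by move: (clB x); rewrite (CB x xC) /= => /forallP/(_ y); rewrite (CB y yC) /= => /implyP.
Qed.

(* A shortest [u1]-[u2] path avoiding [v] closes a cycle through [v], which lies
   in a block, hence in a clique. *)
Lemma adjacent_neighbours v u1 u2 : e v u1 -> e v u2 -> u1 != u2 ->
  connect (induced e [set~ v]) u1 u2 -> e u1 u2.
Proof.
move=> vu1 vu2 neq12 /connectP[p0 /shortenP[p u1p uniq_p _ u2_last]].
have u1V : u1 \in [set~ v] by rewrite !inE eq_sym; apply: contraTneq vu1 => ->; rewrite eirr.
have v_notin : v \notin u1 :: p by apply/negP => /(path_induced_sub u1p u1V); rewrite !inE eqxx.
have cyc : cycle e (v :: u1 :: p).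
  by rewrite /= rcons_path vu1 (induced_path u1p) -u2_last esym vu2.
have uniq_c : uniq (v :: u1 :: p) by rewrite cons_uniq v_notin.
apply: (nonseparable_adjacent (cycle_nonseparable esym uniq_c cyc)) => //.
  by rewrite !inE eqxx orbT.
by rewrite in_set u2_last in_cons mem_last orbT.
Qed.

Lemma avoiding_path_sub_component (W : {set T}) v u x s y :
  x \in W -> path (induced e W) x s -> v \notin x :: s -> y \in x :: s ->
  y \in component e [set~ v] u -> {subset x :: s <= W :&: component e [set~ v] u}.
Proof.
move=> xW xs v_notin ys yK z zs.
have sV : {subset x :: s <= [set~ v]}.
  by move=> t ts; rewrite !inE; apply: contraNneq v_notin => <-.
have xsV := path_induced (induced_path xs) sV.
have czy := path_connect_sym (induced_connect_sym esym _) xsV zs ys.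
by rewrite inE (path_induced_sub xs xW) // (connect_component esym u (sV z zs) czy).
Qed.

(* A shortest path in [W] between two vertices of the component [K] of [G - v]
   crosses [v] at most once, and the two neighbours of [v] on it are adjacent,
   so [v] can be bypassed. *)
Lemma connectedb_setI_component (W : {set T}) v u :
  connectedb e W -> connectedb e (W :&: component e [set~ v] u).
Proof.
set K := component e [set~ v] u; move=> /connectedbP cW.
have K_neq z : z \in K -> z != v by rewrite !inE => /andP[].
apply/connectedbP => a b /setIP[aW aK] /setIP[bW bK].
have /connectP[p0 /shortenP[p ap uniq_p _ b_last]] := cW a b aW bW.
have [v_p | v_notin] := boolP (v \in p); last first.
  have v_notin' : v \notin a :: p by rewrite in_cons negb_or eq_sym K_neq.
  have sub := avoiding_path_sub_component aW ap v_notin' (mem_head a p) aK.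
  by apply/connectP; exists p => //; apply: path_induced (induced_path ap) sub.
case/splitPr: v_p ap uniq_p b_last => p1 [|u2 p2]; rewrite last_cat.
  by move=> _ _ /= b_v; move: (K_neq b bK); rewrite b_v eqxx.
rewrite cat_path -cat_cons cat_uniq /= => /andP[ap1 /and3P[u1v vu2 u2p2]].
case/and3P=> _ disj /andP[v_notin2 _] b_last; set u1 := last a p1.
have [v_notin1 u2_notin1] : v \notin a :: p1 /\ u2 \notin a :: p1.
  by move: disj; rewrite negb_or => /andP[-> /norP[]].
have u2W : u2 \in W by case/and3P: vu2.
have sub1 := avoiding_path_sub_component aW ap1 v_notin1 (mem_head a p1) aK.
have b_in : b \in u2 :: p2 by rewrite b_last mem_last.
have sub2 := avoiding_path_sub_component u2W u2p2 v_notin2 b_in bK.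
have [u1WK u2WK] := (sub1 _ (mem_last a p1), sub2 _ (mem_head u2 p2)).
have e12 : e u1 u2.
  apply: (adjacent_neighbours (v := v)); first by rewrite esym; case/and3P: u1v.
  - by case/and3P: vu2.
  - by apply: contraNneq u2_notin1 => <-; apply: mem_last.
  by apply: (component_connect esym (u := u)); [case/setIP: u1WK | case/setIP: u2WK].
apply: (@connect_trans _ _ u1).
  by apply/connectP; exists p1; first exact: path_induced (induced_path ap1) sub1.
apply: (@connect_trans _ _ u2); first by apply: connect1; rewrite /induced u1WK u2WK e12.
by apply/connectP; exists p2; first exact: path_induced (induced_path u2p2) sub2.
Qed.

End BlockGraphs.

Section SteinerDistance.
Variables (T : finType) (e : rel T).
Hypotheses (esym : symmetric e) (eirr : irreflexive e).

Lemma edge_rel_induced (W : {set T}) (F : {set {set T}}) :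
  [forall f in F, subgraph_edge e W f] -> subrel (edge_rel F) (induced e W).
Proof.
move/forallP=> edgesF a b abF; have := implyP (edgesF [set a; b]) abF.
case/existsP=> x /existsP[y /and4P[exy xW yW /eqP ab_xy]].
have : (x \in [set a; b]) && (y \in [set a; b]) by rewrite ab_xy !inE !eqxx orbT.
have : (a \in [set x; y]) && (b \in [set x; y]) by rewrite -ab_xy !inE !eqxx orbT.
rewrite !inE => /andP[/orP[]/eqP-> /orP[]/eqP->] /andP[]; rewrite ?orbb.
- by move=> _ /eqP y_x; rewrite y_x eirr in exy.
- by rewrite /induced xW yW exy.
- by rewrite /induced xW yW esym exy.
- by move=> /eqP x_y; rewrite x_y eirr in exy.
Qed.

Lemma steiner_candidate_connectedb (S : {set T}) W F :
  steiner_candidate e S (W, F) -> connectedb e W.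
Proof.
case/and3P=> _ /edge_rel_induced sub connF; apply/connectedbP => x y xW yW.
move/forallP/(_ x): connF; rewrite xW => /forallP/(_ y); rewrite yW /=.
by apply: connect_sub => a b /sub; apply: connect1.
Qed.

Lemma steiner_candidate_card (S : {set T}) W F : S != set0 ->
  steiner_candidate e S (W, F) -> #|S| + #|separators e S| <= #|F| + 1.
Proof.
move=> S0 candWF; have connW := steiner_candidate_connectedb candWF.
case/and3P: candWF => /= SW _ /forallP connF; have [s sS] := set0Pn _ S0.
have sW := subsetP SW s sS.
have sepW : S :|: separators e S \subset W.
  by rewrite subUset SW (separators_sub S0 SW connW).
rewrite -card_setU_separators (leq_trans (subset_leq_card sepW)) //.
apply: (card_le_connected_edges sW) => x xW.
by move/(_ x): connF; rewrite xW => /forallP/(_ s); rewrite sW.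
Qed.

Hypotheses (bg : block_graph e) (conn : connectedb e [set: T]).

(* Take [W] smallest: a vertex [v] of [W] outside [S] not separating [S] would
   leave [S] in one component [K] of [G - v], and [W :&: K] would be smaller. *)
Lemma connected_superset_sub_separators (S : {set T}) :
  exists2 W : {set T}, (S \subset W) && connectedb e W & W \subset S :|: separators e S.
Proof.
pose P (W : {set T}) := (S \subset W) && connectedb e W.
have PT : P setT by rewrite /P subsetT conn.
case: (@arg_minnP _ setT P (fun W => #|W|) PT) => W PW minW; exists W => //.
case/andP: PW => SW cW; apply/subsetP => v vW; rewrite in_setU.
have [//|v_notin /=] := boolP (v \in S).
rewrite inE /separates; have SV : S \subset [set~ v].
  by apply/subsetP => s sS; rewrite !inE; apply: contraNneq v_notin => <-.
rewrite SV /=; apply/negP => /existsP[u /andP[_ SK]].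
have := minW (W :&: component e [set~ v] u).
rewrite /P subsetI SW SK connectedb_setI_component //= => /(_ isT).
rewrite /geq /= leqNgt => /negP; apply; apply: proper_card; apply/properP.
by split; [exact: subsetIl | exists v; rewrite // !inE eqxx andbF].
Qed.

Lemma steiner_dist_separators (S : {set T}) :
  S != set0 -> steiner_dist e S = #|S| + #|separators e S| - 1.
Proof.
move=> S0; have [s sS] := set0Pn _ S0.
have [W /andP[SW cW] W_sub] := connected_superset_sub_separators S.
have W_eq : W = S :|: separators e S.
  by apply/eqP; rewrite eqEsubset W_sub subUset SW (separators_sub S0 SW cW).
apply/eqP; rewrite eqn_leq; apply/andP; split.
  have [F /and3P[edgesF connF cardF]] := exists_spanning_edges (subsetP SW s sS) cW.
  apply: leq_trans (@geq_bigmin_cond _ (steiner_candidate e S) _ _ (W, F) _) _.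
    by rewrite /steiner_candidate /= SW edgesF connF.
  by rewrite /= -card_setU_separators -W_eq.
rewrite /steiner_dist; elim/big_ind: _ => [|x y lex ley|[W' F] candWF].
- rewrite -card_setU_separators leq_subLR (leq_trans (max_card _)) // -cardsT.
  by rewrite -(card_imset [set: T] (@set1_inj T)) ltnW // ltnS max_card.
- by rewrite leq_min lex ley.
by rewrite leq_subLR [1 + _]addnC; apply: steiner_candidate_card S0 candWF.
Qed.

End SteinerDistance.

Lemma Nk_separates (T : finType) (e : rel T) v k :
  Nk e [set~ v] k = \sum_(S : {set T} | #|S| == k) separates e S v.
Proof.
rewrite /Nk -sum1_card big_mkcond [RHS]big_mkcond /=; apply: eq_bigr => S _.
by rewrite !inE /separates; case: (S \subset _); case: (#|S| == k); case: [exists _ in _, _].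
Qed.

Lemma sum_card_separators (T : finType) (e : rel T) k : 0 < k ->
  \sum_(S : {set T} | #|S| == k) #|separators e S| =
    \sum_(v in cut_vertices e) Nk e [set~ v] k.
Proof.
move=> k_gt0; under [RHS]eq_bigr do rewrite Nk_separates.
rewrite exchange_big /=; apply: eq_bigr => S /eqP card_S.
have S0 : S != set0 by rewrite -card_gt0 card_S.
have /subsetP sep_cut := separators_sub_cut_vertices e S0.
rewrite -sum1_card big_mkcond [RHS]big_mkcond /=; apply: eq_bigr => v _.
case sep_v: (separates e S v); last by rewrite inE sep_v; case: (_ \in _).
by rewrite inE sep_v sep_cut // inE.
Qed.

Theorem mainTheorem4 (T : finType) (e : rel T) :
  symmetric e -> irreflexive e ->
  connectedb e [set: T] -> block_graph e ->
  forall k : nat, 2 <= k <= #|T| ->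
  steiner_wiener e k =
    \sum_(v in cut_vertices e) Nk e [set~ v] k + (k - 1) * 'C(#|T|, k).
Proof.
move=> esym eirr conn bg k /andP[k_ge2 _]; have k_gt0 : 0 < k := ltnW k_ge2.
rewrite -sum_card_separators // /steiner_wiener.
rewrite (eq_bigr (fun S => k - 1 + #|separators e S|)) => [|S /eqP card_S]; last first.
  have S0 : S != set0 by rewrite -card_gt0 card_S.
  by rewrite steiner_dist_separators // card_S addnBAC.
rewrite big_split /= addnC -card_draws; congr (_ + _).
by rewrite sum_nat_const mulnC; congr (_ * _); apply: eq_card => S; rewrite inE.
Qed.
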